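(* Let $H$ be a traceless hermitian $4\times 4$ matrix with pairwise distinct eigenvalues $\lambda_1,\dots,\lambda_4$, let $C(z)=\prod_{k=1}^4(z-\lambda_k)$, and let $F_4(t)=\sum_{k=1}^4 \exp(i\lambda_k t)/C'(\lambda_k)$. Then for all real $t$, $$\exp(itH)=\left[H^3-iH^2\frac{d}{dt}-H\left(\tfrac12\operatorname{tr}(H^2)+\frac{d^2}{dt^2}\right)+I\left(-\tfrac13\operatorname{tr}(H^3)+\tfrac12 i\operatorname{tr}(H^2)\frac{d}{dt}+i\frac{d^3}{dt^3}\right)\right]F_4(t).$$
   Context: $I$ is the $4\times4$ identity matrix; a matrix coefficient multiplying a differential operator means the operator is applied to $F_4(t)$ and the result multiplies the matrix. *)

From HB Require Import structures.
From mathcomp Require Import all_boot all_order all_algebra.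
From mathcomp Require Import all_classical all_reals all_analysis.
From mathcomp Require Import complex.
Set Implicit Arguments. Unset Strict Implicit. Unset Printing Implicit Defensive.
Import Order.TTheory GRing.Theory Num.Theory numFieldNormedType.Exports.
Local Open Scope ring_scope.
Local Open Scope complex_scope.

Section Defs.
Variable R : realType.

Definition csum_to (a : nat -> R[i]) (l : R[i]) : Prop :=
  (series (fun n => complex.Re (a n)) @ \oo --> complex.Re l)%classic /\
  (series (fun n => complex.Im (a n)) @ \oo --> complex.Im l)%classic.

Definition is_mexp (n : nat) (A E : 'M[R[i]]_n) : Prop :=
  forall i j, csum_to (fun k => (A ^+ k) i j / (k`!)%:R) (E i j).

Definition cexp (z : R[i]) : R[i] :=
  (expR (complex.Re z))%:C * ((cos (complex.Im z)) +i* (sin (complex.Im z))).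

Definition cderive_n (n : nat) (F : R -> R[i]) : R -> R[i] :=
  fun t => (derive1n n (fun s => complex.Re (F s)) t) +i*
           (derive1n n (fun s => complex.Im (F s)) t).

Definition hermitian_mx (n : nat) (H : 'M[R[i]]_n) : Prop :=
  forall i j, H j i = (H i j)^*.

Definition Cpoly (lam : 'I_4 -> R[i]) : {poly R[i]} :=
  \prod_(k < 4) ('X - (lam k)%:P).

Definition F4 (lam : 'I_4 -> R[i]) (t : R) : R[i] :=
  \sum_(k < 4) cexp ('i * lam k * t%:C) / ((Cpoly lam)^`()).[lam k].

End Defs.

(* Being hermitian with distinct eigenvalues, H is diagonal in a basis of
   eigenvectors, and both sides act diagonally in that basis: exp(itH) by
   e^{i lam_k t}, through its exponential series.  The derivatives of F_4 are
   D_n = sum_m c_m (i lam_m)^n with c_m = e^{i lam_m t} / C'(lam_m), so the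
   bracket acts by sum_m c_m q_m(lam_k), where q_m is the cubic polynomial read
   off the bracket.  Because tr H = 0, Newton's identities show that q_m(z) is
   the Lagrange numerator C(z) / (z - lam_m) = prod_{j <> m} (z - lam_j); at
   z = lam_k only the term m = k survives, and it equals c_k C'(lam_k) =
   e^{i lam_k t}. *)

From HB Require Import structures.
From mathcomp Require Import all_boot all_order all_algebra.
From mathcomp Require Import all_classical all_reals all_analysis.
From mathcomp Require Import complex ring lra.
Import Order.TTheory GRing.Theory Num.Theory numFieldNormedType.Exports.
Local Open Scope ring_scope.
Local Open Scope complex_scope.
Set Implicit Arguments. Unset Strict Implicit. Unset Printing Implicit Defensive.
Local Notation Re := complex.Re.
Local Notation Im := complex.Im.

Section ComplexParts.
Variable R : rcfType.
Implicit Types x y : R[i].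

Lemma ReD x y : Re (x + y) = Re x + Re y. Proof. by case: x; case: y. Qed.
Lemma ImD x y : Im (x + y) = Im x + Im y. Proof. by case: x; case: y. Qed.
Lemma ReM x y : Re (x * y) = Re x * Re y - Im x * Im y. Proof. by case: x; case: y. Qed.
Lemma ImM x y : Im (x * y) = Re x * Im y + Im x * Re y.
Proof. by case: x => a b; case: y => c d /=; ring. Qed.

Lemma Re_sum (I : Type) (r : seq I) (f : I -> R[i]) :
  Re (\sum_(i <- r) f i) = \sum_(i <- r) Re (f i).
Proof. by elim/big_ind2: _ => // a [? ?] b [? ?] <- <-. Qed.

End ComplexParts.

Section ComplexSeries.
Variable R : realType.
Implicit Types (a b : nat -> R[i]) (w A B : R[i]).

Definition expi (x : R) : R[i] := cos x +i* sin x.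

Lemma cexp_i (x : R) : cexp ('i * x%:C) = expi x.
Proof. by rewrite /cexp /expi /= !mul0r !mul1r subr0 !add0r expR0 rmorph1 mul1r. Qed.

Lemma csum_toD a b A B : csum_to a A -> csum_to b B ->
  csum_to (fun k => a k + b k) (A + B).
Proof.
move=> [aRe aIm] [bRe bIm]; split.
- have -> : (fun k => Re (a k + b k)) = (fun k => Re (a k)) + (fun k => Re (b k)).
    by apply/funext => k; rewrite ReD.
  by rewrite seriesD ReD; apply: cvgD.
- have -> : (fun k => Im (a k + b k)) = (fun k => Im (a k)) + (fun k => Im (b k)).
    by apply/funext => k; rewrite ImD.
  by rewrite seriesD ImD; apply: cvgD.
Qed.

Lemma csum_toMl w a A : csum_to a A -> csum_to (fun k => w * a k) (w * A).
Proof.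
move=> [aRe aIm]; split.
- have -> : (fun k => Re (w * a k)) =
      Re w *: (fun k => Re (a k)) - Im w *: (fun k => Im (a k)).
    by apply/funext => k; rewrite ReM.
  rewrite seriesD seriesN !seriesZ ReM.
  by apply: cvgB; apply: cvgZ => //; apply: cvg_cst.
- have -> : (fun k => Im (w * a k)) =
      Re w *: (fun k => Im (a k)) + Im w *: (fun k => Re (a k)).
    by apply/funext => k; rewrite ImM.
  rewrite seriesD !seriesZ ImM.
  by apply: cvgD; apply: cvgZ => //; apply: cvg_cst.
Qed.

Lemma csum_to0 : csum_to (fun=> 0 : R[i]) 0.
Proof.
have series0 : series (fun=> 0 : R) = fun=> 0.
  by apply/funext => n; rewrite /series /= big1.
by split; rewrite /= series0; apply: cvg_cst.
Qed.

Lemma csum_to_sum (I : Type) (r : seq I) (a : I -> nat -> R[i]) (A : I -> R[i]) :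
  (forall m, csum_to (a m) (A m)) ->
  csum_to (fun k => \sum_(m <- r) a m k) (\sum_(m <- r) A m).
Proof.
move=> aA; elim: r => [|m r IH].
  by rewrite big_nil; under eq_fun do rewrite big_nil; apply: csum_to0.
by rewrite big_cons; under eq_fun do rewrite big_cons; apply: csum_toD.
Qed.

Lemma expr_i k : ('i : R[i]) ^+ k =
  ((~~ odd k)%:R * (-1) ^+ k./2) +i* ((odd k)%:R * (-1) ^+ k.-1./2).
Proof.
have i_double m : ('i : R[i]) ^+ m.*2 = ((-1) ^+ m)%:C.
  by rewrite -muln2 mulnC exprM sqr_i rmorphXn rmorphN1.
have k_halves := odd_double_half k.
case: (odd k) k_halves => /= k_halves.
- have -> : k.-1 = k./2.*2 by rewrite -[in LHS]k_halves.
  rewrite doubleK -[in LHS]k_halves exprD i_double expr1.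
  by apply/eqP; rewrite eq_complex ReM ImM /=; apply/andP; split; apply/eqP; ring.
- rewrite -[in LHS]k_halves add0n i_double.
  by apply/eqP; rewrite eq_complex /=; apply/andP; split; apply/eqP; ring.
Qed.

Lemma expi_coeff (x : R) k :
  ('i * x%:C) ^+ k / k`!%:R = cos_coeff x k +i* sin_coeff x k.
Proof.
rewrite exprMn -rmorphXn expr_i -(rmorph_nat (real_complex R)) -fmorphV.
rewrite -mulrA -rmorphM; apply/eqP; rewrite eq_complex /= /cos_coeff /sin_coeff /=.
by rewrite !mulr0 subr0 add0r -exprnP !mulrA !eqxx.
Qed.

Lemma csum_to_expi (x : R) :
  csum_to (fun k => ('i * x%:C) ^+ k / k`!%:R) (expi x).
Proof.
under eq_fun do rewrite expi_coeff.
by split; rewrite /= unlock;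
  [apply: is_cvg_series_cos_coeff | apply: is_cvg_series_sin_coeff].
Qed.

End ComplexSeries.

Section ExpiDerivatives.
Variable R : realType.

Lemma is_derive_mull (mu s : R) : is_derive s 1 (fun s => mu * s) mu.
Proof. by have := is_deriveZ mu (is_derive_id s 1); rewrite /GRing.scale /= mulr1. Qed.

#[local] Instance is_derive_cosM (mu s : R) :
  is_derive s 1 (fun s => cos (mu * s)) (- sin (mu * s) * mu).
Proof. exact: (is_derive1_comp (f := cos) _ (is_derive_mull mu s)). Qed.

#[local] Instance is_derive_sinM (mu s : R) :
  is_derive s 1 (fun s => sin (mu * s)) (cos (mu * s) * mu).
Proof. exact: (is_derive1_comp (f := sin) _ (is_derive_mull mu s)). Qed.

Lemma is_derive_Re_expi (w : R[i]) (mu s : R) :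
  is_derive s 1 (fun s => Re (w * expi (mu * s)))
    (Re (w * ('i * mu%:C) * expi (mu * s))).
Proof.
have -> : (fun s => Re (w * expi (mu * s))) =
    Re w *: (fun s => cos (mu * s)) - Im w *: (fun s => sin (mu * s)).
  by apply/funext => x; rewrite ReM.
by apply: is_derive_eq; rewrite !ReM !ImM /= /GRing.scale /=; ring.
Qed.

Lemma derive1n_Re_expi_sum n (w : 'I_n -> R[i]) (mu : 'I_n -> R) j :
  derive1n j (fun s => Re (\sum_(m < n) w m * expi (mu m * s))) =
  fun s => Re (\sum_(m < n) w m * ('i * (mu m)%:C) ^+ j * expi (mu m * s)).
Proof.
elim: j => [|j IH].
  apply/funext => s; rewrite derive1n0; congr Re.
  by apply: eq_bigr => m _; rewrite expr0 mulr1.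
rewrite derive1nS IH; apply/funext => s; rewrite derive1E.
set w' := fun m => w m * ('i * (mu m)%:C) ^+ j.
have -> : (fun s => Re (\sum_(m < n) w' m * expi (mu m * s))) =
    \sum_(m < n) (fun s => Re (w' m * expi (mu m * s))).
  by apply/funext => x; rewrite Re_sum fct_sumE.
rewrite (derive_val (is_derive := is_derive_sum (fun m => is_derive_Re_expi (w' m) (mu m) s))).
by rewrite Re_sum; apply: eq_bigr => m _; rewrite /w' exprSr !mulrA.
Qed.

Lemma Im_Re (z : R[i]) : Im z = Re (- 'i * z).
Proof. by case: z => a b /=; ring. Qed.

Lemma derive1n_Im_expi_sum n (w : 'I_n -> R[i]) (mu : 'I_n -> R) j :
  derive1n j (fun s => Im (\sum_(m < n) w m * expi (mu m * s))) =
  fun s => Im (\sum_(m < n) w m * ('i * (mu m)%:C) ^+ j * expi (mu m * s)).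
Proof.
have Im_Re_sum (v : 'I_n -> R[i]) s : Im (\sum_(m < n) v m * expi (mu m * s)) =
    Re (\sum_(m < n) (- 'i * v m) * expi (mu m * s)).
  by rewrite Im_Re mulr_sumr; under eq_bigr do rewrite mulrA.
under eq_fun do rewrite Im_Re_sum.
rewrite derive1n_Re_expi_sum; apply/funext => s; rewrite Im_Re_sum.
by congr Re; apply: eq_bigr => m _; rewrite !mulrA.
Qed.

Lemma cderive_n_expi_sum n (w : 'I_n -> R[i]) (mu : 'I_n -> R) j t :
  cderive_n j (fun s => \sum_(m < n) w m * expi (mu m * s)) t =
  \sum_(m < n) w m * ('i * (mu m)%:C) ^+ j * expi (mu m * t).
Proof.
rewrite /cderive_n derive1n_Re_expi_sum derive1n_Im_expi_sum.
by case: (\sum_(m < n) _).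
Qed.

End ExpiDerivatives.

Section Eigenbasis.
Variables (F : fieldType) (n : nat).
Implicit Types (H M V : 'M[F]_n) (v : 'rV[F]_n) (a : F).

Lemma eigenvector_mulmxX H v a m : v *m H = a *: v -> v *m H ^+ m = a ^+ m *: v.
Proof.
move=> vH; elim: m => [|m IH]; first by rewrite expr0 scale1r mulmx1.
by rewrite exprSr -mulmxE mulmxA IH -scalemxAl vH scalerA -exprSr.
Qed.

Lemma eigenvector_mulmx_prod (I : Type) (r : seq I) (P : pred I) (b : I -> F) H v a :
  v *m H = a *: v ->
  v *m \prod_(j <- r | P j) (H - (b j)%:M) = (\prod_(j <- r | P j) (a - b j)) *: v.
Proof.
move=> vH; elim: r => [|j r IH]; first by rewrite !big_nil mulmx1 scale1r.
rewrite !big_cons; case: (P j) => //.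
by rewrite -mulmxE mulmxA mulmxBr vH mul_mx_scalar -scalerBl -scalemxAl IH scalerA.
Qed.

Lemma eigenvector_mulmx_cubic H v a (b3 b2 b1 b0 : F) : v *m H = a *: v ->
  v *m (b3 *: H ^+ 3 - b2 *: H ^+ 2 - b1 *: H + b0 *: 1%:M) =
  (b3 * a ^+ 3 - b2 * a ^+ 2 - b1 * a + b0) *: v.
Proof.
move=> vH; rewrite !mulmxDr !mulmxN -!scalemxAr !(eigenvector_mulmxX _ vH) vH mulmx1.
by rewrite !scalerA !scalerDl !scaleNr.
Qed.

Lemma unitmx_row_neq0 V k : V \in unitmx -> row k V != 0.
Proof.
move=> V_unit; apply/eqP => /(congr1 (mulmx^~ (invmx V))).
rewrite -row_mul mulmxV // mul0mx => /rowP/(_ k); rewrite !mxE eqxx.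
by move/eqP; rewrite oner_eq0.
Qed.

Lemma eigenvectors_unitmx (lam : 'I_n -> F) H V : injective lam ->
  (forall k, row k V *m H = lam k *: row k V) -> (forall k, row k V != 0) ->
  V \in unitmx.
Proof.
move=> lam_inj VH V_neq0.
rewrite -row_free_unit -kermx_eq0; apply/rowV0P => w /sub_kermxP wV.
apply/rowP => m; rewrite mxE.
pose P := \prod_(j < n | j != m) (H - (lam j)%:M).
have lam_sep : \prod_(j < n | j != m) (lam m - lam j) != 0.
  by apply/prodf_neq0 => j jm; rewrite subr_eq0 (inj_eq lam_inj) eq_sym.
have /eqP : w *m V *m P = 0 by rewrite wV mul0mx.
rewrite (mulmx_sum_row w V) mulmx_suml (bigD1 m) //= big1 ?addr0 => [|k km].
- rewrite -scalemxAl (eigenvector_mulmx_prod _ _ _ (VH m)) scalerA scaler_eq0.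
  by rewrite (negbTE (V_neq0 m)) orbF mulf_eq0 (negbTE lam_sep) orbF => /eqP.
- rewrite -scalemxAl /P (eigenvector_mulmx_prod _ _ _ (VH k)) (bigD1 k km) /=.
  by rewrite subrr mul0r scale0r scaler0.
Qed.

Lemma eigenbasis_exists (lam : 'I_n -> F) H : injective lam ->
  (forall k, eigenvalue H (lam k)) ->
  exists2 V, V \in unitmx & forall k, row k V *m H = lam k *: row k V.
Proof.
move=> lam_inj lam_eig; pose V := \matrix_k nz_row (eigenspace H (lam k)).
have VH k : row k V *m H = lam k *: row k V.
  by apply/eigenspaceP; rewrite rowK nz_row_sub.
exists V => //; apply: eigenvectors_unitmx lam_inj VH _ => k.
by rewrite rowK nz_row_eq0; apply: lam_eig.
Qed.

Lemma eigenbasis_diag (c : 'I_n -> F) M V : V \in unitmx ->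
  (forall k, row k V *m M = c k *: row k V) ->
  M = invmx V *m diag_mx (\row_k c k) *m V.
Proof.
move=> V_unit VM; suff VM_diag : V *m M = diag_mx (\row_k c k) *m V.
  by rewrite -mulmxA -VM_diag mulmxA mulVmx ?mul1mx.
apply/row_matrixP => k; rewrite !row_mul VM row_diag_mx mxE -scalemxAl.
by rewrite -rowE.
Qed.

Lemma mxtrace_eigenbasis (lam : 'I_n -> F) H V m : V \in unitmx ->
  (forall k, row k V *m H = lam k *: row k V) ->
  \tr (H ^+ m) = \sum_k lam k ^+ m.
Proof.
move=> V_unit VH; have VHm k := eigenvector_mulmxX m (VH k).
rewrite (eigenbasis_diag V_unit VHm) mxtrace_mulC mulmxA mulmxV // mul1mx.
by rewrite mxtrace_diag; apply: eq_bigr => k _; rewrite mxE.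
Qed.

End Eigenbasis.

Lemma conj_diag_mxE (R : comUnitRingType) n (V : 'M[R]_n) (c : 'I_n -> R) i j :
  (invmx V *m diag_mx (\row_k c k) *m V) i j = \sum_m invmx V i m * V m j * c m.
Proof. by rewrite mxE; apply: eq_bigr => m _; rewrite mul_mx_diag !mxE mulrAC. Qed.

Lemma is_mexp_eigenbasis (R : realType) n (A V : 'M[R[i]]_n) (x : 'I_n -> R) :
  V \in unitmx -> (forall k, row k V *m A = ('i * (x k)%:C) *: row k V) ->
  is_mexp A (invmx V *m diag_mx (\row_k expi (x k)) *m V).
Proof.
move=> V_unit VA i j; rewrite conj_diag_mxE.
have Apow m := eigenbasis_diag V_unit (fun k => eigenvector_mulmxX m (VA k)).
under eq_fun do rewrite Apow conj_diag_mxE mulr_suml.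
apply: csum_to_sum => m; under eq_fun do rewrite -[_ * _ / _]mulrA.
by apply: csum_toMl; apply: csum_to_expi.
Qed.

Lemma hermitian_eigenvalue_real (R : realType) n (H : 'M[R[i]]_n) (x : 'rV_n) a :
  hermitian_mx H -> x *m H = a *: x -> x != 0 -> (Re a)%:C = a.
Proof.
move=> H_herm xH x_neq0.
pose N := \sum_i x 0 i * (x 0 i)^*.
pose q := \sum_j \sum_i x 0 i * H i j * (x 0 j)^*.
have qE : q = a * N.
  rewrite /q /N mulr_sumr; apply: eq_bigr => j _.
  by move/rowP: xH => /(_ j); rewrite !mxE -mulr_suml => ->; rewrite mulrA.
have q_real : q^* = q.
  rewrite /q rmorph_sum exchange_big; apply: eq_bigr => j _.
  rewrite rmorph_sum; apply: eq_bigr => i _.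
  by rewrite !rmorphM /= conjcK -H_herm; ring.
have N_real : N^* = N.
  by rewrite /N rmorph_sum; apply: eq_bigr => i _; rewrite rmorphM /= conjcK mulrC.
have N_neq0 : N != 0.
  apply: contraNneq x_neq0 => /eqP.
  rewrite psumr_eq0 => [/allP x0|? _]; last exact: mulcJ_ge0.
  apply/eqP/rowP => i; have /implyP := x0 i (mem_index_enum i).
  by rewrite /= mulf_eq0 conjc_eq0 orbb mxE => /(_ isT)/eqP.
have : a^* = a by apply: (mulIf N_neq0); rewrite -qE -q_real qE rmorphM /= N_real.
by case: a {qE xH} => b c /= [] c_eq; congr (_ +i* _); lra.
Qed.

Lemma deriv_prod_XsubC_at (R : comNzRingType) n (a : 'I_n -> R) k :
  (\prod_(j < n) ('X - (a j)%:P))^`().[a k] = \prod_(j < n | j != k) (a k - a j).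
Proof.
rewrite (bigD1 k) //= derivM derivXsubC mul1r hornerD hornerM hornerXsubC subrr mul0r.
by rewrite addr0 horner_prod; apply: eq_bigr => j _; rewrite hornerXsubC.
Qed.

Lemma lagrange_numerator4 (F : numFieldType) (l : 'I_4 -> F) m z :
  \sum_k l k = 0 ->
  \prod_(j < 4 | j != m) (z - l j) =
    z ^+ 3 + l m * z ^+ 2 + (l m ^+ 2 - (\sum_k l k ^+ 2) / 2%:R) * z
    + (l m ^+ 3 - (\sum_k l k ^+ 2) / 2%:R * l m - (\sum_k l k ^+ 3) / 3%:R).
Proof.
have : m \in enum 'I_4 := mem_enum _ m.
rewrite !enum_ordSl enum_ord0 !inE => /or4P[] /eqP -> {m};
rewrite !big_ord_recl !big_ord0 big_mkcond !big_ord_recl big_ord0 /=;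
set a := l _; set b := l _; set c := l _; set d := l _ => sum0;
have -> : d = - (a + b + c) by apply/eqP; rewrite -subr_eq0 -sum0; apply/eqP; ring.
all: by field.
Qed.

Lemma moment_combination_at_node (C : numClosedFieldType) (l c : 'I_4 -> C) k :
  \sum_m l m = 0 ->
  let D n := \sum_m c m * ('i * l m) ^+ n in
  let s2 := \sum_m l m ^+ 2 in let s3 := \sum_m l m ^+ 3 in
  D 0%N * l k ^+ 3 - ('i * D 1%N) * l k ^+ 2 - (s2 / 2%:R * D 0%N + D 2%N) * l k
   + (- (s3 / 3%:R) * D 0%N + 'i * (s2 / 2%:R) * D 1%N + 'i * D 3%N)
  = c k * \prod_(j < 4 | j != k) (l k - l j).
Proof.
move=> sum0 D s2 s3.
have -> : c k * \prod_(j < 4 | j != k) (l k - l j) =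
    \sum_m c m * \prod_(j < 4 | j != m) (l k - l j).
  symmetry; rewrite (bigD1 k) //= [X in _ + X]big1 ?addr0 // => m mk.
  by rewrite (bigD1 k) 1?eq_sym //= subrr mul0r mulr0.
under eq_bigr do rewrite lagrange_numerator4 //.
have i2 : 'i * 'i = -1 :> C by rewrite -expr2 sqrCi.
rewrite /D /s2 /s3 !big_ord_recl !big_ord0; ring: i2.
Qed.

Theorem mainTheorem2 (R : realType) (H : 'M[R[i]]_4) (lam : 'I_4 -> R[i])
  (hH : hermitian_mx H) (htr : \tr H = 0)
  (hlam : char_poly H = Cpoly lam) (hdist : injective lam) :
  forall t : R,
    let F := F4 lam in
    let D := fun n => cderive_n n F t in
    is_mexp (('i * t%:C) *: H)
      (D 0%N *: H ^+ 3 - ('i * D 1%N) *: H ^+ 2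
       - ((\tr (H ^+ 2) / 2%:R) * D 0%N + D 2%N) *: H
       + (- (\tr (H ^+ 3) / 3%:R) * D 0%N + 'i * (\tr (H ^+ 2) / 2%:R) * D 1%N
          + 'i * D 3%N) *: 1%:M).
Proof.
move=> t F D.
have lam_eig k : eigenvalue H (lam k).
  rewrite eigenvalue_root_char hlam /root /Cpoly horner_prod (bigD1 k) //=.
  by rewrite hornerXsubC subrr mul0r.
have [V V_unit VH] := eigenbasis_exists hdist lam_eig.
pose mu k := Re (lam k).
have lam_real k : lam k = (mu k)%:C.
  exact/esym/(hermitian_eigenvalue_real hH (VH k))/unitmx_row_neq0.
have trX m : \tr (H ^+ m) = \sum_k lam k ^+ m := mxtrace_eigenbasis m V_unit VH.
have lam_sum0 : \sum_k lam k = 0.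
  by apply: etrans _ htr; rewrite -[H]expr1 trX; apply: eq_bigr => k _; rewrite expr1.
pose dC k := \prod_(j < 4 | j != k) (lam k - lam j).
pose c k := expi (mu k * t) / dC k.
have F_expi : F = fun s => \sum_m (dC m)^-1 * expi (mu m * s).
  apply/funext => s; apply: eq_bigr => m _.
  rewrite /Cpoly deriv_prod_XsubC_at mulrC; congr (_ * _).
  by rewrite lam_real -mulrA -rmorphM /= cexp_i.
have Dc n : D n = \sum_m c m * ('i * lam m) ^+ n.
  rewrite /D F_expi cderive_n_expi_sum; apply: eq_bigr => m _.
  by rewrite /c lam_real mulrC mulrA.
have dC_neq0 k : dC k != 0.
  by apply/prodf_neq0 => j jk; rewrite subr_eq0 (inj_eq hdist) eq_sym.
set RHS := (X in is_mexp _ X).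
have -> : RHS = invmx V *m diag_mx (\row_k expi (mu k * t)) *m V.
  apply: eigenbasis_diag V_unit _ => k.
  rewrite (eigenvector_mulmx_cubic _ _ _ _ (VH k)) !trX !Dc.
  have /= -> := moment_combination_at_node c k lam_sum0.
  by rewrite /c -mulrA mulVf ?mulr1.
apply: is_mexp_eigenbasis V_unit _ => k.
by rewrite -scalemxAr VH scalerA lam_real rmorphM /= mulrA mulrAC.
Qed.
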